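(* Assume [LJ1]–[LJ4] and let $\ell>0$. For every $\varepsilon>0$ there exists $\eta=\eta(\varepsilon)>0$ such that for all $z\in\mathbb R$ $$F(z):=\inf_{a:\,|a-\min\{\ell,\gamma\}|\ge\varepsilon}\tfrac12\big(J_1(a)+J_1(2z-a)\big)+J_2(z)-(J_0^{**})'(\ell)(z-\ell)-J_0^{**}(\ell)\ \ge\ \eta.$$
   Context: Potentials: $J_1,J_2:\mathbb R\to(-\infty,+\infty]$; $J_{CB}:=J_1+J_2$; $J_0(z):=J_2(z)+\frac12\inf\{J_1(z_1)+J_1(z_2):z_1+z_2=2z\}$; $J_0^{**}$ is the convex lower semicontinuous envelope of $J_0$ (under the hypotheses below it is differentiable, and $(J_0^{**})'(\ell)$ denotes its derivative at $\ell$). Hypotheses: [LJ1] $\{z:J_0(z)=J_0^{**}(z)\}\cap\{z:J_0\text{ is affine in a neighbourhood of }z\}=\emptyset$. [LJ2] for every $z$ with $J_0(z)=J_0^{**}(z)$, the set $\{(z_1,z_2):z_1+z_2=2z,\ J_0(z)=J_2(z)+\frac12(J_1(z_1)+J_1(z_2))\}$ has exactly one element. [LJ3] $J_1,J_2$ are $C^{1,\alpha}$ on their domains for some $0<\alpha\le1$, $J_0$ is $C^1$ on its domain, $\operatorname{dom}J_1=\operatorname{dom}J_2\supset(0,+\infty)$, $\lim_{z\to+\infty}J_j(z)=0$ ($j=1,2$) and $\lim_{z\to+\infty}J_0(z)=:J_0(+\infty)\in\mathbb R$. [LJ4] there is a convex $\Psi:\mathbb R\to[0,+\infty]$ with $\lim_{z\to-\infty}\Psi(z)/|z|=+\infty$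 and constants $c_1,c_2>0$ with $c_1(\Psi(z)-1)\le J_j(z)\le c_2\max\{\Psi(z),|z|\}$ for all $z\in\mathbb R$, $j=1,2$; there are $\delta_1,\delta_2,\gamma>0$ with $\{\delta_j\}=\operatorname{argmin}J_j$ and $\{\gamma\}=\operatorname{argmin}J_0$; $J_j$ is strictly convex on $(-\infty,\delta_j)\cap\operatorname{dom}J_j$; $J_0(\gamma)<J_0(+\infty)$; and $J_0(z)=J_0^{**}(z)$ for all $z\le\gamma$. *)

From Stdlib Require Import Reals Lra ClassicalEpsilon.
Open Scope R_scope.

Inductive ER : Type := Fin (x : R) | PInf | MInf.

Definition ER_le (x y : ER) : Prop :=
  match x, y with
  | MInf, _ => True
  | _, PInf => True
  | Fin a, Fin b => a <= b
  | _, _ => False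
  end.

Definition ER_lt (x y : ER) : Prop := ER_le x y /\ x <> y.

(* addition; +oo absorbs (the case +oo + -oo never arises under the hypotheses) *)
Definition ER_plus (x y : ER) : ER :=
  match x, y with
  | PInf, _ | _, PInf => PInf
  | MInf, _ | _, MInf => MInf
  | Fin a, Fin b => Fin (a + b)
  end.

Definition ER_neg (x : ER) : ER :=
  match x with Fin a => Fin (- a) | PInf => MInf | MInf => PInf end.

(* multiplication by a scalar t (only used with t > 0) *)
Definition ER_scale (t : R) (x : ER) : ER :=
  match x with Fin a => Fin (t * a) | e => e end.

Definition ER_max (x y : ER) : ER :=
  match x, y with
  | PInf, _ | _, PInf => PInf
  | MInf, e | e, MInf => e
  | Fin a, Fin b => Fin (Rmax a b)
  end.

Definition ER_is_glb (P : ER -> Prop) (m : ER) : Prop :=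
  (forall v, P v -> ER_le m v) /\ (forall m', (forall v, P v -> ER_le m' v) -> ER_le m' m).
Definition ER_is_lub (P : ER -> Prop) (m : ER) : Prop :=
  (forall v, P v -> ER_le v m) /\ (forall m', (forall v, P v -> ER_le v m') -> ER_le m m').

Definition ER_inf (P : ER -> Prop) : ER := epsilon (inhabits PInf) (ER_is_glb P).
Definition ER_sup (P : ER -> Prop) : ER := epsilon (inhabits MInf) (ER_is_lub P).

Definition J0 (J1 J2 : R -> ER) (z : R) : ER :=
  ER_plus (J2 z)
    (ER_scale (1/2) (ER_inf (fun v => exists z1 z2, z1 + z2 = 2 * z /\
                                      v = ER_plus (J1 z1) (J1 z2)))).

(** Convex lower semicontinuous envelope f** (Fenchel biconjugate):
    supremum of all affine minorants of f. *)
Definition conv_env (f : R -> ER) (z : R) : ER :=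
  ER_sup (fun v => exists a b, (forall x, ER_le (Fin (a * x + b)) (f x)) /\
                                v = Fin (a * z + b)).

Definition in_dom (f : R -> ER) (z : R) : Prop := exists v, f z = Fin v.

(* real part (the value on the domain; 0 elsewhere, never used there) *)
Definition fin (f : R -> ER) (z : R) : R :=
  match f z with Fin v => v | _ => 0 end.

Definition diff_within (D : R -> Prop) (g : R -> R) (x l : R) : Prop :=
  forall eps, 0 < eps -> exists del, 0 < del /\
    forall y, D y -> y <> x -> Rabs (y - x) < del ->
      Rabs ((g y - g x) / (y - x) - l) < eps.

Definition cont_within (D : R -> Prop) (g : R -> R) (x : R) : Prop :=
  forall eps, 0 < eps -> exists del, 0 < del /\
    forall y, D y -> Rabs (y - x) < del -> Rabs (g y - g x) < eps.

Definition C1_on_dom (f : R -> ER) : Prop :=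
  exists g', (forall x, in_dom f x -> diff_within (in_dom f) (fin f) x (g' x)) /\
             (forall x, in_dom f x -> cont_within (in_dom f) g' x).

Definition C1alpha_on_dom (alpha : R) (f : R -> ER) : Prop :=
  exists g', (forall x, in_dom f x -> diff_within (in_dom f) (fin f) x (g' x)) /\
    (forall c d, (forall x, c <= x <= d -> in_dom f x) ->
       exists L, forall x y, c <= x <= d -> c <= y <= d -> x <> y ->
         Rabs (g' x - g' y) <= L * Rpower (Rabs (x - y)) alpha).

Definition affine_near (f : R -> ER) (z : R) : Prop :=
  exists del a b, 0 < del /\ forall x, Rabs (x - z) < del -> f x = Fin (a * x + b).

Definition ER_deriv (f : R -> ER) (x l : R) : Prop :=
  (exists del, 0 < del /\ forall y, Rabs (y - x) < del -> in_dom f y) /\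
  derivable_pt_lim (fin f) x l.

Definition is_argmin_singleton (f : R -> ER) (m : R) : Prop :=
  (forall z, ER_le (f m) (f z)) /\
  (forall z, (forall w, ER_le (f z) (f w)) -> z = m).

Definition strictly_convex_below (f : R -> ER) (d : R) : Prop :=
  forall x y vx vy t, x < d -> y < d -> f x = Fin vx -> f y = Fin vy -> x <> y ->
    0 < t < 1 -> ER_lt (f (t * x + (1 - t) * y)) (Fin (t * vx + (1 - t) * vy)).

Definition ER_convex (f : R -> ER) : Prop :=
  forall x y t, 0 < t < 1 ->
    ER_le (f (t * x + (1 - t) * y)) (ER_plus (ER_scale t (f x)) (ER_scale (1 - t) (f y))).

Definition lim_pinfty (f : R -> ER) (L : R) : Prop :=
  forall eps, 0 < eps -> exists M, forall z, M < z ->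
    exists v, f z = Fin v /\ Rabs (v - L) < eps.

Definition LJ1 (J1 J2 : R -> ER) : Prop :=
  forall z, J0 J1 J2 z = conv_env (J0 J1 J2) z -> ~ affine_near (J0 J1 J2) z.

Definition LJ2 (J1 J2 : R -> ER) : Prop :=
  forall z v, J0 J1 J2 z = Fin v -> conv_env (J0 J1 J2) z = Fin v ->
    exists z1 z2,
      (z1 + z2 = 2 * z /\
       J0 J1 J2 z = ER_plus (J2 z) (ER_scale (1/2) (ER_plus (J1 z1) (J1 z2)))) /\
      forall w1 w2, w1 + w2 = 2 * z ->
        J0 J1 J2 z = ER_plus (J2 z) (ER_scale (1/2) (ER_plus (J1 w1) (J1 w2))) ->
        w1 = z1 /\ w2 = z2.

Definition LJ3 (alpha J0inf : R) (J1 J2 : R -> ER) : Prop :=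
  0 < alpha <= 1 /\
  C1alpha_on_dom alpha J1 /\ C1alpha_on_dom alpha J2 /\
  C1_on_dom (J0 J1 J2) /\
  (forall z, in_dom J1 z <-> in_dom J2 z) /\
  (forall z, 0 < z -> in_dom J1 z) /\
  lim_pinfty J1 0 /\ lim_pinfty J2 0 /\
  lim_pinfty (J0 J1 J2) J0inf.

Definition LJ4 (Psi : R -> ER) (c1 c2 d1 d2 gamma J0inf : R) (J1 J2 : R -> ER) : Prop :=
  ER_convex Psi /\ (forall z, ER_le (Fin 0) (Psi z)) /\
  (forall K, exists M, forall z, z < M -> ER_le (Fin (K * Rabs z)) (Psi z)) /\
  0 < c1 /\ 0 < c2 /\
  (forall z, ER_le (ER_scale c1 (ER_plus (Psi z) (Fin (-1)))) (J1 z) /\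
             ER_le (J1 z) (ER_scale c2 (ER_max (Psi z) (Fin (Rabs z))))) /\
  (forall z, ER_le (ER_scale c1 (ER_plus (Psi z) (Fin (-1)))) (J2 z) /\
             ER_le (J2 z) (ER_scale c2 (ER_max (Psi z) (Fin (Rabs z))))) /\
  0 < d1 /\ 0 < d2 /\ 0 < gamma /\
  is_argmin_singleton J1 d1 /\ is_argmin_singleton J2 d2 /\
  is_argmin_singleton (J0 J1 J2) gamma /\
  strictly_convex_below J1 d1 /\ strictly_convex_below J2 d2 /\
  ER_lt (J0 J1 J2 gamma) (Fin J0inf) /\
  (forall z, z <= gamma -> J0 J1 J2 z = conv_env (J0 J1 J2) z).

(** F(z) from Lemma 4.1, with s = (J0** )'(l) *)
Definition Fl (J1 J2 : R -> ER) (gamma l s eps z : R) : ER :=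
  ER_plus
    (ER_inf (fun v => exists a, eps <= Rabs (a - Rmin l gamma) /\
                                v = ER_scale (1/2) (ER_plus (J1 a) (J1 (2 * z - a)))))
    (ER_plus (J2 z)
      (ER_plus (Fin (- (s * (z - l)))) (ER_neg (conv_env (J0 J1 J2) l)))).

From Stdlib Require Import Reals Lra Classical ClassicalEpsilon.
Open Scope R_scope.

(* Let [L z = J0**(l) + s (z - l)] be the tangent of [J0**] at [l]; [s <= 0] because
   [J0 >= L] has a finite limit at +oo.  The split energy
   [V a z = J2 z + (J1 a + J1 (2z - a)) / 2] dominates [J0 >= J0** >= L], and
   [V a z = L z] makes [z] a contact point of [J0] and [J0**] lying on the tangent:
   by [LJ1] this forces [z = min(l, gamma)], and by [LJ2] the optimal splitting there is
   [a = z].  So [V - L > 0] wherever [|a - min(l, gamma)| >= eps], and the gap is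
   uniform: for large [z] by the limits at +oo together with [J0(+oo) <= min J1 / 2],
   for [min(a, 2z - a) -> -oo] by the superlinear growth of [Psi], and on the remaining
   compact box by lower semicontinuity of [J1] and [J2].  The latter holds on the
   domain by differentiability and off it because convexity of [Psi] and [J0 = J0**]
   left of [gamma] make [J1], [J2] blow up at the boundary of the domain. *)

Lemma ER_le_refl x : ER_le x x.
Proof. destruct x; simpl; auto; lra. Qed.

Lemma ER_le_trans x y z : ER_le x y -> ER_le y z -> ER_le x z.
Proof. destruct x, y, z; simpl; intros; try tauto; lra. Qed.

Lemma ER_le_antisym x y : ER_le x y -> ER_le y x -> x = y.
Proof. destruct x, y; simpl; intros; try tauto; try reflexivity. f_equal; lra. Qed.

Lemma ER_le_Fin_trans r r' x : r <= r' -> ER_le (Fin r') x -> ER_le (Fin r) x.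
Proof. intros Hr; apply ER_le_trans; simpl; lra. Qed.

Lemma ER_le_plus x x' y y' :
  ER_le x x' -> ER_le y y' -> ER_le (ER_plus x y) (ER_plus x' y').
Proof. destruct x, x', y, y'; simpl; intros; try tauto; lra. Qed.

Lemma ER_le_scale t x y : 0 <= t -> ER_le x y -> ER_le (ER_scale t x) (ER_scale t y).
Proof. destruct x, y; simpl; intros; try tauto. apply Rmult_le_compat_l; auto. Qed.

Lemma ER_plus_comm x y : ER_plus x y = ER_plus y x.
Proof. destruct x, y; simpl; auto. f_equal; ring. Qed.

Definition ER_gt (r : R) (x : ER) : Prop :=
  match x with Fin v => r < v | PInf => True | MInf => False end.

Lemma ER_gt_plus_split r x y : x <> MInf -> y <> MInf -> ER_gt r (ER_plus x y) ->
  exists r1 r2, r = r1 + r2 /\ ER_gt r1 x /\ ER_gt r2 y.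
Proof.
  destruct x as [a| |], y as [b| |]; simpl; intros Hx Hy H; try congruence.
  - exists (a - (a + b - r) / 2), (b - (a + b - r) / 2); simpl; repeat split; lra.
  - exists (a - 1), (r - (a - 1)); simpl; repeat split; lra.
  - exists (r - (b - 1)), (b - 1); simpl; repeat split; lra.
  - exists r, 0; simpl; repeat split; lra.
Qed.

Lemma ER_gt_scale r t x : 0 < t -> ER_gt r (ER_scale t x) -> ER_gt (r / t) x.
Proof.
  destruct x; simpl; auto. intros Ht H.
  apply (Rmult_lt_reg_l t); auto. field_simplify; lra.
Qed.

Lemma ER_glb_exists (P : ER -> Prop) : exists m, ER_is_glb P m.
Proof.
  destruct (classic (P MInf)) as [HM|HM].
  { exists MInf; split; [intros v _; destruct v; simpl; auto|].
    intros m' Hm'. apply Hm'. auto. }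
  destruct (classic (exists r, P (Fin r))) as [[r0 Hr0]|HF].
  - destruct (classic (exists lb, forall r, P (Fin r) -> lb <= r)) as [[lb Hlb]|Hnb].
    + set (E := fun x => P (Fin (- x))).
      assert (Hb : bound E) by (exists (- lb); intros x Hx; specialize (Hlb _ Hx); lra).
      assert (He : exists x, E x)
        by (exists (- r0); unfold E; rewrite Ropp_involutive; auto).
      destruct (completeness E Hb He) as [M [HM1 HM2]].
      exists (Fin (- M)). split.
      * intros [r| |] Hv; simpl; auto.
        assert (E (- r)) by (unfold E; rewrite Ropp_involutive; auto).
        specialize (HM1 _ H). lra.
      * intros [q| |] Hm'; simpl; auto.
        -- assert (M <= - q); [|lra]. apply HM2. intros x Hx.
           specialize (Hm' _ Hx). simpl in Hm'. lra.
        -- exact (Hm' _ Hr0).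
    + exists MInf. split; [intros v _; destruct v; simpl; auto|].
      intros [q| |] Hm'; simpl; auto.
      * apply Hnb. exists q. intros r Hr. exact (Hm' _ Hr).
      * exact (Hm' _ Hr0).
  - exists PInf. split.
    + intros [r| |] Hv; simpl; auto. apply HF. exists r; auto.
    + intros m' _. destruct m'; simpl; auto.
Qed.

Lemma ER_lub_exists (P : ER -> Prop) : exists m, ER_is_lub P m.
Proof.
  destruct (classic (P PInf)) as [HM|HM].
  { exists PInf; split; [intros v _; destruct v; simpl; auto|].
    intros m' Hm'. apply Hm'. auto. }
  destruct (classic (exists r, P (Fin r))) as [[r0 Hr0]|HF].
  - destruct (classic (exists ub, forall r, P (Fin r) -> r <= ub)) as [[ub Hub]|Hnb].
    + set (E := fun x => P (Fin x)).
      assert (Hb : bound E) by (exists ub; intros x Hx; apply Hub; auto).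
      assert (He : exists x, E x) by (exists r0; auto).
      destruct (completeness E Hb He) as [M [HM1 HM2]].
      exists (Fin M). split.
      * intros [r| |] Hv; simpl; auto.
      * intros [q| |] Hm'; simpl; auto.
        -- apply HM2. intros x Hx. exact (Hm' _ Hx).
        -- exact (Hm' _ Hr0).
    + exists PInf. split; [intros v _; destruct v; simpl; auto|].
      intros [q| |] Hm'; simpl; auto.
      * apply Hnb. exists q. intros r Hr. exact (Hm' _ Hr).
      * exact (Hm' _ Hr0).
  - exists MInf. split.
    + intros [r| |] Hv; simpl; auto. apply HF. exists r; auto.
    + intros m' _. destruct m'; simpl; auto.
Qed.

Lemma ER_inf_lb (P : ER -> Prop) v : P v -> ER_le (ER_inf P) v.
Proof.
  intros Hv. apply (proj1 (epsilon_spec _ _ (ER_glb_exists P))); auto.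
Qed.

Lemma ER_inf_glb (P : ER -> Prop) m :
  (forall v, P v -> ER_le m v) -> ER_le m (ER_inf P).
Proof. intros Hm. apply (proj2 (epsilon_spec _ _ (ER_glb_exists P))); auto. Qed.

Lemma ER_sup_ub (P : ER -> Prop) v : P v -> ER_le v (ER_sup P).
Proof.
  intros Hv. apply (proj1 (epsilon_spec _ _ (ER_lub_exists P))); auto.
Qed.

Lemma ER_sup_lub (P : ER -> Prop) m :
  (forall v, P v -> ER_le v m) -> ER_le (ER_sup P) m.
Proof. intros Hm. apply (proj2 (epsilon_spec _ _ (ER_lub_exists P))); auto. Qed.

Lemma fin_eq (f : R -> ER) x v : f x = Fin v -> fin f x = v.
Proof. intros H. unfold fin. rewrite H. auto. Qed.

Lemma conv_env_le f z : ER_le (conv_env f z) (f z).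
Proof. apply ER_sup_lub. intros v [a [b [H ->]]]. auto. Qed.

Lemma conv_env_ge_affine f a b z :
  (forall x, ER_le (Fin (a * x + b)) (f x)) -> ER_le (Fin (a * z + b)) (conv_env f z).
Proof. intros H. apply ER_sup_ub. exists a, b. auto. Qed.

Lemma conv_env_le_bound f z C :
  (forall a b, (forall x, ER_le (Fin (a * x + b)) (f x)) -> a * z + b <= C) ->
  ER_le (conv_env f z) (Fin C).
Proof. intros H. apply ER_sup_lub. intros v [a [b [Hab ->]]]. simpl. auto. Qed.

Lemma conv_env_convex f x1 x2 v1 v2 t : 0 <= t <= 1 ->
  conv_env f x1 = Fin v1 -> conv_env f x2 = Fin v2 ->
  ER_le (conv_env f (t * x1 + (1 - t) * x2)) (Fin (t * v1 + (1 - t) * v2)).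
Proof.
  intros Ht H1 H2. apply conv_env_le_bound. intros a b Hab.
  pose proof (conv_env_ge_affine f a b x1 Hab) as E1.
  pose proof (conv_env_ge_affine f a b x2 Hab) as E2.
  rewrite H1 in E1. rewrite H2 in E2. simpl in E1, E2.
  assert (t * (a * x1 + b) <= t * v1) by (apply Rmult_le_compat_l; lra).
  assert ((1 - t) * (a * x2 + b) <= (1 - t) * v2) by (apply Rmult_le_compat_l; lra).
  nra.
Qed.

(* Without an affine minorant the envelope is [-oo] everywhere. *)
Lemma conv_env_MInf f z x : conv_env f z = MInf -> conv_env f x = MInf.
Proof.
  intros Hz. apply ER_le_antisym; [|destruct (conv_env f x); simpl; auto].
  apply ER_sup_lub. intros v [a [b [Hab ->]]].
  pose proof (conv_env_ge_affine f a b z Hab) as H. rewrite Hz in H. contradiction.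
Qed.

Lemma tangent_le_chord (g : R -> R) l z s t0 :
  derivable_pt_lim g l s -> 0 < t0 ->
  (forall t, 0 < t < t0 -> g (l + t * (z - l)) <= g l + t * (g z - g l)) ->
  g l + s * (z - l) <= g z.
Proof.
  intros Hder Ht0 Hchord.
  destruct (Req_dec z l) as [->|Hzl]; [lra|].
  assert (Hzl' : 0 < Rabs (z - l)) by (apply Rabs_pos_lt; lra).
  apply Rle_plus_epsilon. intros e He.
  destruct (Hder (e / Rabs (z - l)) ltac:(apply Rdiv_lt_0_compat; lra)) as [[dl Hdl] Hq].
  set (t := Rmin (t0 / 2) (dl / (2 * Rabs (z - l)))).
  assert (Ht : 0 < t) by (apply Rmin_pos; apply Rdiv_lt_0_compat; lra).
  assert (Htt0 : t < t0) by (unfold t; pose proof (Rmin_l (t0 / 2) (dl / (2 * Rabs (z - l)))); lra).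
  assert (Htdl : t * Rabs (z - l) < dl).
  { assert (t <= dl / (2 * Rabs (z - l))) by apply Rmin_r.
    apply (Rmult_le_compat_r (Rabs (z - l))) in H; [|lra].
    replace (dl / (2 * Rabs (z - l)) * Rabs (z - l)) with (dl / 2) in H by (field; lra).
    lra. }
  set (h := t * (z - l)).
  assert (Hh : Rabs h = t * Rabs (z - l)) by (unfold h; rewrite Rabs_mult, Rabs_right; lra).
  assert (Hh0 : h <> 0) by (unfold h; intro E; apply Rmult_integral in E; lra).
  specialize (Hq h Hh0 ltac:(rewrite Hh; exact Htdl)).
  set (q := (g (l + h) - g l) / h) in Hq.
  assert (Hqz : q * (z - l) <= g z - g l).
  { assert (Hqh : q * h = g (l + h) - g l) by (unfold q; field; auto).
    specialize (Hchord t (conj Ht Htt0)).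
    apply (Rmult_le_reg_l t); [lra|]. fold h in Hchord.
    replace (t * (q * (z - l))) with (q * h) by (unfold h; ring). lra. }
  assert ((s - q) * (z - l) <= e).
  { apply Rle_trans with (Rabs ((s - q) * (z - l))); [apply Rle_abs|].
    rewrite Rabs_mult, Rabs_minus_sym.
    apply Rlt_le. replace e with (e / Rabs (z - l) * Rabs (z - l)) by (field; lra).
    apply Rmult_lt_compat_r; auto. }
  lra.
Qed.

Lemma conv_env_tangent f l s c0 :
  conv_env f l = Fin c0 -> ER_deriv (conv_env f) l s ->
  forall z, ER_le (Fin (c0 + s * (z - l))) (conv_env f z).
Proof.
  intros Hc [[del [Hdel Hdom]] Hder] z.
  destruct (conv_env f z) as [v| |] eqn:Ez; simpl; auto.
  2:{ rewrite (conv_env_MInf f z l Ez) in Hc. discriminate. }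
  rewrite <- (fin_eq _ _ _ Hc), <- (fin_eq _ _ _ Ez).
  set (k := Rabs (z - l) + 1).
  assert (Hk : 0 < k) by (unfold k; pose proof (Rabs_pos (z - l)); lra).
  apply (tangent_le_chord _ l z s (Rmin 1 (del / k)) Hder).
  { apply Rmin_pos; [lra|]. apply Rdiv_lt_0_compat; lra. }
  intros t [Ht0 Ht].
  assert (Ht1 : t < 1) by (pose proof (Rmin_l 1 (del / k)); lra).
  assert (Htk : t * k < del).
  { pose proof (Rmin_r 1 (del / k)).
    replace del with (del / k * k) by (field; lra). apply Rmult_lt_compat_r; lra. }
  assert (Hnear : Rabs (l + t * (z - l) - l) < del).
  { replace (l + t * (z - l) - l) with (t * (z - l)) by ring.
    rewrite Rabs_mult, Rabs_right by lra. unfold k in Htk. lra. }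
  destruct (Hdom _ Hnear) as [w Ew].
  pose proof (conv_env_convex f z l v c0 t ltac:(lra) Ez Hc) as Hcc.
  replace (t * z + (1 - t) * l) with (l + t * (z - l)) in Hcc by ring.
  rewrite Ew in Hcc. simpl in Hcc.
  rewrite (fin_eq _ _ _ Ew), (fin_eq _ _ _ Hc), (fin_eq _ _ _ Ez). lra.
Qed.
Definition lsc_at (J : R -> ER) (p : R) : Prop :=
  forall r, ER_gt r (J p) ->
    exists d, 0 < d /\ forall y, Rabs (y - p) < d -> ER_le (Fin r) (J y).

Lemma lsc_at_diff_within J g' p v :
  (forall z, J z <> MInf) -> diff_within (in_dom J) (fin J) p g' -> J p = Fin v ->
  lsc_at J p.
Proof.
  intros HM Hd Hp r Hr. rewrite Hp in Hr. simpl in Hr.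
  destruct (Hd 1 ltac:(lra)) as [del [Hdel Hq]].
  set (k := Rabs g' + 1).
  assert (Hk : 0 < k) by (unfold k; pose proof (Rabs_pos g'); lra).
  exists (Rmin del ((v - r) / k)). split.
  { apply Rmin_pos; auto. apply Rdiv_lt_0_compat; lra. }
  intros y Hy.
  assert (Hy1 : Rabs (y - p) < del) by (eapply Rlt_le_trans; [exact Hy|apply Rmin_l]).
  assert (Hy2 : k * Rabs (y - p) < v - r).
  { replace (v - r) with (k * ((v - r) / k)) by (field; lra).
    apply Rmult_lt_compat_l; auto. eapply Rlt_le_trans; [exact Hy|apply Rmin_r]. }
  destruct (J y) as [u| |] eqn:Ey; simpl; auto; [|exact (HM y Ey)].
  destruct (Req_dec y p) as [->|Hyp].
  { rewrite Hp in Ey. injection Ey as <-. lra. }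
  specialize (Hq y (ex_intro _ u Ey) Hyp Hy1).
  rewrite (fin_eq _ _ _ Ey), (fin_eq _ _ _ Hp) in Hq.
  set (q := (u - v) / (y - p)) in Hq.
  assert (Hq1 : u - v = q * (y - p)) by (unfold q; field; lra).
  assert (Hq2 : Rabs q < k).
  { unfold k. replace q with ((q - g') + g') by ring.
    eapply Rle_lt_trans; [apply Rabs_triang|]. lra. }
  assert (Rabs (u - v) <= k * Rabs (y - p)).
  { rewrite Hq1, Rabs_mult. apply Rmult_le_compat_r; [apply Rabs_pos|lra]. }
  pose proof (Rle_abs (- (u - v))). rewrite Rabs_Ropp in *. lra.
Qed.

Lemma real_induction (H : R -> R -> Prop) a b : a <= b ->
  (forall u v w, u <= v -> v <= w -> H u v -> H v w -> H u w) ->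
  (forall x, a <= x <= b -> exists d, 0 < d /\
     forall u v, x - d < u <= x -> x <= v < x + d -> H u v) ->
  H a b.
Proof.
  intros Hab Hglue Hloc.
  assert (Haa : H a a).
  { destruct (Hloc a ltac:(lra)) as [d [Hd Hd2]]. apply Hd2; lra. }
  set (E := fun t => a <= t <= b /\ H a t).
  assert (Hb : bound E) by (exists b; intros t [Ht _]; lra).
  assert (He : exists t, E t) by (exists a; split; [lra|auto]).
  destruct (completeness E Hb He) as [c [Hc1 Hc2]].
  assert (Hac : a <= c) by (apply Hc1; split; [lra|auto]).
  assert (Hcb : c <= b) by (apply Hc2; intros t [Ht _]; lra).
  destruct (Hloc c ltac:(lra)) as [d [Hd Hd2]].
  assert (Ht : exists t, E t /\ c - d < t).
  { apply NNPP. intro Hn. assert (c <= c - d); [|lra]. apply Hc2. intros t Et.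
    apply Rnot_lt_le. intro. apply Hn. exists t. auto. }
  destruct Ht as [t [[Ht1 Ht2] Ht3]].
  assert (Htc : t <= c) by (apply Hc1; split; auto).
  assert (Hv : forall v, c <= v < c + d -> H a v).
  { intros v Hv. apply (Hglue a t v); [lra|lra|exact Ht2|]. apply Hd2; lra. }
  destruct (Req_dec c b) as [<-|Hne]; [apply Hv; lra|].
  exfalso. set (v := Rmin (c + d / 2) b).
  assert (Hv3 : c < v) by (unfold v; apply Rmin_glb_lt; lra).
  assert (E v) by (split; [unfold v in *; pose proof (Rmin_r (c + d / 2) b); lra|];
                   apply Hv; unfold v in *; pose proof (Rmin_l (c + d / 2) b); lra).
  pose proof (Hc1 _ H0). lra.
Qed.

(* The radius [d] is part of [P] so that the lemma can be reapplied with [y] as a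
   parameter of a neighbourhood, which gives uniformity on rectangles. *)
Lemma uniform_on_interval (P : R -> R -> R -> Prop) a b : a <= b ->
  (forall d d' e e' y, 0 < d' <= d -> 0 < e' <= e -> P d y e -> P d' y e') ->
  (forall x, a <= x <= b -> exists d e, 0 < d /\ 0 < e /\
     forall y, Rabs (y - x) < d -> P d y e) ->
  exists d e, 0 < d /\ 0 < e /\ forall y, a <= y <= b -> P d y e.
Proof.
  intros Hab Hmono Hloc.
  apply (real_induction (fun u v => exists d e, 0 < d /\ 0 < e /\
                           forall y, u <= y <= v -> P d y e)); auto.
  - intros u v w _ _ [d1 [e1 [Hd1 [He1 H1]]]] [d2 [e2 [Hd2 [He2 H2]]]].
    exists (Rmin d1 d2), (Rmin e1 e2).
    assert (0 < Rmin d1 d2) by (apply Rmin_pos; lra).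
    assert (0 < Rmin e1 e2) by (apply Rmin_pos; lra).
    split; [lra|split; [lra|]]. intros y Hy. destruct (Rle_dec y v).
    + apply (Hmono d1 _ e1); [split; [lra|apply Rmin_l]|split; [lra|apply Rmin_l]|].
      apply H1; lra.
    + apply (Hmono d2 _ e2); [split; [lra|apply Rmin_r]|split; [lra|apply Rmin_r]|].
      apply H2; lra.
  - intros x Hx. destruct (Hloc x Hx) as [d [e [Hd [He Hde]]]].
    exists d. split; auto. intros u v Hu Hv. exists d, e. repeat split; auto.
    intros y Hy. apply Hde, Rabs_def1; lra.
Qed.

Definition split_energy (J1 J2 : R -> ER) (a z : R) : ER :=
  ER_plus (J2 z) (ER_scale (1/2) (ER_plus (J1 a) (J1 (2 * z - a)))).

Lemma J0_le_split_energy J1 J2 a z : ER_le (J0 J1 J2 z) (split_energy J1 J2 a z).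
Proof.
  apply ER_le_plus; [apply ER_le_refl|]. apply ER_le_scale; [lra|].
  apply ER_inf_lb. exists a, (2 * z - a). split; [ring|auto].
Qed.

Lemma split_energy_sym J1 J2 a z : split_energy J1 J2 (2 * z - a) z = split_energy J1 J2 a z.
Proof.
  unfold split_energy. replace (2 * z - (2 * z - a)) with a by ring.
  rewrite (ER_plus_comm (J1 a)). auto.
Qed.

Lemma split_energy_ge J1 J2 a z p q1 q2 :
  ER_le (Fin p) (J2 z) -> ER_le (Fin q1) (J1 a) -> ER_le (Fin q2) (J1 (2 * z - a)) ->
  ER_le (Fin (p + 1/2 * (q1 + q2))) (split_energy J1 J2 a z).
Proof.
  intros H2 Ha Hb.
  apply (ER_le_plus (Fin p) _ (Fin (1/2 * (q1 + q2)))); auto.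
  apply (ER_le_scale (1/2) (Fin (q1 + q2))); [lra|].
  apply (ER_le_plus (Fin q1) _ (Fin q2)); auto.
Qed.

Lemma split_energy_lsc J1 J2 a0 z0 r :
  (forall z, J1 z <> MInf) -> (forall z, J2 z <> MInf) ->
  (forall p, lsc_at J1 p) -> (forall p, lsc_at J2 p) ->
  ER_gt r (split_energy J1 J2 a0 z0) ->
  exists d, 0 < d /\ forall a z, Rabs (a - a0) < d -> Rabs (z - z0) < d ->
    ER_le (Fin r) (split_energy J1 J2 a z).
Proof.
  intros HM1 HM2 Hl1 Hl2 H.
  assert (HMs : ER_scale (1/2) (ER_plus (J1 a0) (J1 (2 * z0 - a0))) <> MInf).
  { pose proof (HM1 a0). pose proof (HM1 (2 * z0 - a0)).
    destruct (J1 a0), (J1 (2 * z0 - a0)); simpl; congruence. }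
  destruct (ER_gt_plus_split _ _ _ (HM2 z0) HMs H) as [r2 [r' [Hr [H2 H']]]].
  apply ER_gt_scale in H'; [|lra].
  destruct (ER_gt_plus_split _ _ _ (HM1 a0) (HM1 _) H') as [r1 [r3 [Hr' [H1 H3]]]].
  destruct (Hl2 _ _ H2) as [d2 [Hd2 Hd2']].
  destruct (Hl1 _ _ H1) as [d1 [Hd1 Hd1']].
  destruct (Hl1 _ _ H3) as [d3 [Hd3 Hd3']].
  set (d := Rmin d2 (Rmin d1 (d3 / 3))).
  assert (Hm2 : d <= d2) by apply Rmin_l.
  assert (Hm1 : d <= d1) by (eapply Rle_trans; [apply Rmin_r|apply Rmin_l]).
  assert (Hm3 : d <= d3 / 3) by (eapply Rle_trans; [apply Rmin_r|apply Rmin_r]).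
  exists d. split; [unfold d; repeat apply Rmin_pos; lra|].
  intros a z Ha Hz.
  replace r with (r2 + 1/2 * (r1 + r3)) by (rewrite Hr, <- Hr'; field).
  apply split_energy_ge; [apply Hd2'; lra|apply Hd1'; lra|apply Hd3'].
  replace (2 * z - a - (2 * z0 - a0)) with (2 * (z - z0) - (a - a0)) by ring.
  eapply Rle_lt_trans; [apply Rabs_triang|]. rewrite Rabs_Ropp, Rabs_mult, Rabs_right; lra.
Qed.

Lemma conv_env_affine_between f l s c0 z x :
  conv_env f l = Fin c0 -> (forall y, ER_le (Fin (c0 + s * (y - l))) (conv_env f y)) ->
  conv_env f z = Fin (c0 + s * (z - l)) -> Rmin z l <= x <= Rmax z l ->
  conv_env f x = Fin (c0 + s * (x - l)).
Proof.
  intros Hc Htan Hz Hx.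
  destruct (Req_dec z l) as [->|Hzl].
  { rewrite Rmin_left, Rmax_left in Hx by lra. replace x with l by lra. exact Hz. }
  set (t := (x - l) / (z - l)).
  assert (Htz : t * (z - l) = x - l) by (unfold t; field; lra).
  assert (Ht : 0 <= t <= 1).
  { unfold Rmin, Rmax in Hx. destruct (Rle_dec z l); split; nra. }
  pose proof (conv_env_convex f z l _ _ t Ht Hz Hc) as Hup.
  replace (t * z + (1 - t) * l) with x in Hup by nra.
  apply ER_le_antisym; [eapply ER_le_trans; [exact Hup|]|apply Htan]. simpl. nra.
Qed.

Section Tangency.

Variables (J1 J2 : R -> ER) (gamma l s c0 : R).
Hypothesis HL1 : LJ1 J1 J2.
Hypothesis HL2 : LJ2 J1 J2.
Hypothesis Hargmin : is_argmin_singleton (J0 J1 J2) gamma.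
Hypothesis Hbelow : forall z, z <= gamma -> J0 J1 J2 z = conv_env (J0 J1 J2) z.
Hypothesis Hc0 : conv_env (J0 J1 J2) l = Fin c0.
Hypothesis Htan : forall z, ER_le (Fin (c0 + s * (z - l))) (conv_env (J0 J1 J2) z).
Hypothesis Hs : s <= 0.

(* Between [z] and [l] the envelope is affine; left of [gamma] it coincides with
   [J0], which [LJ1] forbids unless the segment meets [(-oo, gamma]] in a point. *)
Lemma tangent_contact_point z :
  J0 J1 J2 z = Fin (c0 + s * (z - l)) -> conv_env (J0 J1 J2) z = Fin (c0 + s * (z - l)) ->
  z = Rmin l gamma.
Proof.
  intros HJz Hcz.
  destruct (Rlt_le_dec (Rmin z l) gamma) as [Hlt|Hge].
  - destruct (Req_dec z l) as [->|Hzl].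
    { rewrite Rmin_left in Hlt by lra. rewrite Rmin_left; lra. }
    exfalso.
    set (lo := Rmin z l). set (hi := Rmin (Rmax z l) gamma).
    assert (Hhi : hi <= gamma) by apply Rmin_r.
    assert (Hlohi : lo < hi).
    { unfold lo, hi, Rmin, Rmax in *.
      destruct (Rle_dec z l), (Rle_dec z l), (Rle_dec l gamma), (Rle_dec z gamma); lra. }
    apply (HL1 ((lo + hi) / 2)); [apply Hbelow; lra|].
    exists ((hi - lo) / 2), s, (c0 - s * l). split; [lra|].
    intros x Hx. apply Rabs_def2 in Hx.
    rewrite (Hbelow x) by lra.
    replace (s * x + (c0 - s * l)) with (c0 + s * (x - l)) by ring.
    apply (conv_env_affine_between _ l s c0 z); auto.
    assert (hi <= Rmax z l) by apply Rmin_l. unfold lo in *. lra.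
  - assert (Hzg : gamma <= z) by (pose proof (Rmin_l z l); lra).
    assert (Hlg : gamma <= l) by (pose proof (Rmin_r z l); lra).
    rewrite Rmin_right by auto. apply (proj2 Hargmin). intros w.
    eapply ER_le_trans; [|apply (proj1 Hargmin w)].
    rewrite HJz. eapply ER_le_trans; [|apply conv_env_le].
    eapply ER_le_trans; [|apply (Htan gamma)]. simpl. nra.
Qed.

(* Equality would make [z] a contact point carrying two optimal splittings
   [(a, 2z - a)] and [(2z - a, a)]; by [LJ2] they coincide, so [a = z]. *)
Lemma split_energy_gt_tangent eps a z :
  0 < eps -> eps <= Rabs (a - Rmin l gamma) ->
  ER_gt (c0 + s * (z - l)) (split_energy J1 J2 a z).
Proof.
  intros Heps Ha.
  pose proof (ER_le_trans _ _ _ (Htan z) (conv_env_le _ z)) as H1.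
  pose proof (J0_le_split_energy J1 J2 a z) as H2.
  destruct (split_energy J1 J2 a z) as [v| |] eqn:EV; simpl; auto.
  2:{ exact (ER_le_trans _ _ _ H1 H2). }
  apply Rnot_le_lt. intro Hv.
  assert (HJz : J0 J1 J2 z = Fin (c0 + s * (z - l))).
  { apply ER_le_antisym; auto. eapply ER_le_trans; [exact H2|]. simpl; auto. }
  assert (Hcz : conv_env (J0 J1 J2) z = Fin (c0 + s * (z - l))).
  { apply ER_le_antisym; auto. rewrite <- HJz. apply conv_env_le. }
  assert (HV : J0 J1 J2 z = split_energy J1 J2 a z).
  { rewrite EV, HJz. f_equal. pose proof (ER_le_trans _ _ _ H1 H2). simpl in H. lra. }
  destruct (HL2 z _ HJz Hcz) as [z1 [z2 [_ Huniq]]].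
  destruct (Huniq a (2 * z - a) ltac:(ring) HV) as [E1 _].
  rewrite <- split_energy_sym in HV.
  destruct (Huniq (2 * z - a) (2 * z - (2 * z - a)) ltac:(ring) HV) as [E2 _].
  pose proof (tangent_contact_point z HJz Hcz).
  replace (a - Rmin l gamma) with 0 in Ha by lra. rewrite Rabs_R0 in Ha. lra.
Qed.

End Tangency.

Section UniformGap.

Variables (J1 J2 : R -> ER) (l s c0 m eps : R).
Hypothesis HJ1 : forall z, J1 z <> MInf.
Hypothesis HJ2 : forall z, J2 z <> MInf.
Hypothesis Hlsc1 : forall p, lsc_at J1 p.
Hypothesis Hlsc2 : forall p, lsc_at J2 p.
Hypothesis Hgt : forall a z, eps <= Rabs (a - m) -> ER_gt (c0 + s * (z - l)) (split_energy J1 J2 a z).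

Definition has_gap (e a z : R) : Prop :=
  eps <= Rabs (a - m) -> ER_le (Fin (c0 + s * (z - l) + e)) (split_energy J1 J2 a z).

Lemma has_gap_le e e' a z : e' <= e -> has_gap e a z -> has_gap e' a z.
Proof. intros He H Ha. apply (ER_le_Fin_trans _ (c0 + s * (z - l) + e)); auto. lra. Qed.

Lemma has_gap_near a0 z0 : exists d e, 0 < d /\ 0 < e /\
  forall a z, Rabs (a - a0) < d -> Rabs (z - z0) < d -> has_gap e a z.
Proof.
  destruct (Rlt_le_dec (Rabs (a0 - m)) eps) as [Hlt|Hge].
  - exists (eps - Rabs (a0 - m)), 1. split; [lra|split; [lra|]].
    intros a z Ha _ Ham. exfalso.
    pose proof (Rabs_triang (a - a0) (a0 - m)).
    replace (a - a0 + (a0 - m)) with (a - m) in H by ring. lra.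
  - set (L0 := c0 + s * (z0 - l)).
    assert (Hr : exists r, L0 < r /\ ER_gt r (split_energy J1 J2 a0 z0)).
    { pose proof (Hgt a0 z0 Hge) as Hg. fold L0 in Hg.
      destruct (split_energy J1 J2 a0 z0) as [v| |]; simpl in Hg |- *; try tauto.
      - exists ((v + L0) / 2). split; lra.
      - exists (L0 + 1). split; [lra|auto]. }
    destruct Hr as [r [Hr1 Hr2]].
    destruct (split_energy_lsc J1 J2 a0 z0 r HJ1 HJ2 Hlsc1 Hlsc2 Hr2) as [d [Hd Hd']].
    set (k := Rabs s + 1).
    assert (Hk : 0 < k) by (unfold k; pose proof (Rabs_pos s); lra).
    set (d' := Rmin d ((r - L0) / (2 * k))).
    assert (Hd'd : d' <= d) by apply Rmin_l.
    assert (Hd'k : k * d' <= (r - L0) / 2).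
    { replace ((r - L0) / 2) with (k * ((r - L0) / (2 * k))) by (field; lra).
      apply Rmult_le_compat_l; [lra|apply Rmin_r]. }
    exists d', ((r - L0) / 2).
    split; [apply Rmin_pos; [lra|apply Rdiv_lt_0_compat; lra]|split; [lra|]].
    intros a z Ha Hz _.
    apply (ER_le_Fin_trans _ r); [|apply Hd'; lra].
    assert (Hsz : s * (z - z0) <= k * Rabs (z - z0)).
    { pose proof (Rle_abs (s * (z - z0))). rewrite Rabs_mult in H.
      pose proof (Rabs_pos (z - z0)). unfold k. nra. }
    assert (k * Rabs (z - z0) <= k * d') by (apply Rmult_le_compat_l; lra).
    unfold L0 in *. lra.
Qed.

Lemma has_gap_on_box A0 A1 Z0 Z1 : A0 <= A1 -> Z0 <= Z1 ->
  exists e, 0 < e /\ forall a z, A0 <= a <= A1 -> Z0 <= z <= Z1 -> has_gap e a z.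
Proof.
  intros HA HZ.
  assert (Hcol : forall a0, exists d e, 0 < d /\ 0 < e /\
            forall a z, Rabs (a - a0) < d -> Z0 <= z <= Z1 -> has_gap e a z).
  { intros a0.
    destruct (uniform_on_interval
                (fun d z e => forall a, Rabs (a - a0) < d -> has_gap e a z) Z0 Z1 HZ)
      as [d [e [Hd [He H]]]].
    - intros d d' e e' z Hd' He' H a Ha. apply (has_gap_le e); [lra|]. apply H. lra.
    - intros z0 _. destruct (has_gap_near a0 z0) as [d [e [Hd [He H]]]].
      exists d, e. repeat split; auto.
    - exists d, e. repeat split; auto. }
  destruct (uniform_on_interval
              (fun _ a e => forall z, Z0 <= z <= Z1 -> has_gap e a z) A0 A1 HA)
    as [_ [e [_ [He H]]]].
  - intros d d' e e' a _ He' H z Hz. apply (has_gap_le e); [lra|]. auto.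
  - intros a0 _. destruct (Hcol a0) as [d [e [Hd [He H]]]].
    exists d, e. repeat split; auto.
  - exists e. split; auto.
Qed.

End UniformGap.

Lemma ER_convex_PInf_left Psi x p b vb :
  ER_convex Psi -> (forall z, ER_le (Fin 0) (Psi z)) ->
  x < p < b -> Psi b = Fin vb -> Psi p = PInf -> Psi x = PInf.
Proof.
  intros Hconv Hnn Hx Hb Hp.
  set (t := (b - p) / (b - x)).
  assert (Ht : 0 < t < 1).
  { unfold t. split; [apply Rdiv_lt_0_compat; lra|].
    apply (Rmult_lt_reg_r (b - x)); [lra|]. field_simplify; lra. }
  pose proof (Hconv x b t Ht) as H.
  replace (t * x + (1 - t) * b) with p in H by (unfold t; field; lra).
  pose proof (Hnn x). rewrite Hp, Hb in H.
  destruct (Psi x); simpl in *; tauto.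
Qed.

Lemma ER_convex_le_max Psi x w b vx vb :
  ER_convex Psi -> (forall z, ER_le (Fin 0) (Psi z)) ->
  x <= w <= b -> Psi x = Fin vx -> Psi b = Fin vb ->
  exists vw, Psi w = Fin vw /\ vw <= Rmax vx vb.
Proof.
  intros Hconv Hnn Hw Hx Hb.
  destruct (Req_dec w b) as [->|Hwb]; [exists vb; split; auto; apply Rmax_r|].
  destruct (Req_dec w x) as [->|Hwx]; [exists vx; split; auto; apply Rmax_l|].
  set (t := (b - w) / (b - x)).
  assert (Ht : 0 < t < 1).
  { unfold t. split; [apply Rdiv_lt_0_compat; lra|].
    apply (Rmult_lt_reg_r (b - x)); [lra|]. field_simplify; lra. }
  pose proof (Hconv x b t Ht) as H.
  replace (t * x + (1 - t) * b) with w in H by (unfold t; field; lra).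
  pose proof (Hnn w). rewrite Hx, Hb in H.
  destruct (Psi w) as [vw| |]; simpl in *; try tauto.
  exists vw. split; auto.
  pose proof (Rmax_l vx vb). pose proof (Rmax_r vx vb). nra.
Qed.

Lemma conv_env_le_of_bounded_right f p del C : 0 < del ->
  (forall w, p < w <= p + del -> ER_le (f w) (Fin C)) ->
  ER_le (conv_env f p) (Fin C).
Proof.
  intros Hdel Hf. apply conv_env_le_bound. intros a b Hab.
  apply Rle_plus_epsilon. intros e He.
  set (k := Rabs a + 1).
  assert (Hk : 0 < k) by (unfold k; pose proof (Rabs_pos a); lra).
  set (t := Rmin del (e / k)).
  assert (Ht : 0 < t) by (apply Rmin_pos; [lra|apply Rdiv_lt_0_compat; lra]).
  assert (Htk : k * t <= e).
  { replace e with (k * (e / k)) by (field; lra).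
    apply Rmult_le_compat_l; [lra|apply Rmin_r]. }
  pose proof (ER_le_trans _ _ _ (Hab (p + t)) (Hf (p + t) ltac:(pose proof (Rmin_l del (e / k)); unfold t in *; lra))) as H.
  simpl in H.
  pose proof (Rle_abs (- a)). rewrite Rabs_Ropp in *. unfold k in Htk. nra.
Qed.

Lemma ER_le_of_scaled_shift c B x y : 0 <= c ->
  ER_le (Fin B) x -> ER_le (ER_scale c (ER_plus x (Fin (-1)))) y ->
  ER_le (Fin (c * (B - 1))) y.
Proof. destruct x, y; simpl; intros; try tauto; nra. Qed.

Section Coercivity.

Variables (J1 J2 Psi : R -> ER) (c1 c2 gamma : R).
Hypothesis HJ2 : forall z, J2 z <> MInf.
Hypothesis HPsi_convex : ER_convex Psi.
Hypothesis HPsi_nonneg : forall z, ER_le (Fin 0) (Psi z).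
Hypothesis Hc1 : 0 < c1.
Hypothesis Hc2 : 0 < c2.
Hypothesis HB1 : forall z, ER_le (ER_scale c1 (ER_plus (Psi z) (Fin (-1)))) (J1 z) /\
                           ER_le (J1 z) (ER_scale c2 (ER_max (Psi z) (Fin (Rabs z)))).
Hypothesis HB2 : forall z, ER_le (ER_scale c1 (ER_plus (Psi z) (Fin (-1)))) (J2 z) /\
                           ER_le (J2 z) (ER_scale c2 (ER_max (Psi z) (Fin (Rabs z)))).
Hypothesis Hdom : forall z, 0 < z -> in_dom J1 z.
Hypothesis Hgamma : 0 < gamma.
Hypothesis Hbelow : forall z, z <= gamma -> J0 J1 J2 z = conv_env (J0 J1 J2) z.

Lemma Psi_finite_at_1 : exists psi1, Psi 1 = Fin psi1.
Proof.
  destruct (Hdom 1 ltac:(lra)) as [j1 Hj1].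
  pose proof (proj1 (HB1 1)) as H. rewrite Hj1 in H. pose proof (HPsi_nonneg 1).
  destruct (Psi 1) as [psi1| |]; simpl in *; try tauto. eauto.
Qed.

Lemma J_le_of_Psi_le w B : Rabs w <= B -> ER_le (Psi w) (Fin B) ->
  ER_le (J1 w) (Fin (c2 * B)) /\ ER_le (J2 w) (Fin (c2 * B)).
Proof.
  intros Hw HP.
  assert (Hm : ER_le (ER_scale c2 (ER_max (Psi w) (Fin (Rabs w)))) (Fin (c2 * B))).
  { destruct (Psi w) as [q| |]; simpl in HP |- *; try tauto.
    all: apply Rmult_le_compat_l; [lra|]; try apply Rmax_lub; lra. }
  split; (eapply ER_le_trans; [|exact Hm]); [apply (proj2 (HB1 w))|apply (proj2 (HB2 w))].
Qed.

(* If [Psi] stays below [B] at points accumulating to [p] from the right,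
   convexity bounds [Psi], hence [J1], [J2] and [J0], on [(p, 1]]. *)
Lemma conv_env_J0_bounded p B : p < 1 ->
  (forall w, p < w <= 1 -> exists y u, p < y <= w /\ Psi y = Fin u /\ u <= B) ->
  exists C, ER_le (conv_env (J0 J1 J2) p) (Fin C).
Proof.
  intros Hp Hacc.
  destruct Psi_finite_at_1 as [psi1 Hpsi1].
  set (D := c2 * (Rmax B psi1 + 1 + Rabs p)).
  assert (HJ : forall w, p < w <= 1 -> ER_le (J1 w) (Fin D) /\ ER_le (J2 w) (Fin D)).
  { intros w Hw. destruct (Hacc w Hw) as [y [u [Hy [Hu HuB]]]].
    destruct (ER_convex_le_max Psi y w 1 u psi1 HPsi_convex HPsi_nonneg ltac:(lra) Hu Hpsi1)
      as [vw [Hvw Hvw']].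
    apply J_le_of_Psi_le.
    - pose proof (HPsi_nonneg 1) as H0. rewrite Hpsi1 in H0. simpl in H0.
      pose proof (Rmax_r B psi1). pose proof (Rabs_pos p).
      unfold Rabs at 1. destruct (Rcase_abs w); [pose proof (Rle_abs (- p)); rewrite Rabs_Ropp in *|]; lra.
    - rewrite Hvw. simpl. pose proof (Rabs_pos p).
      assert (Rmax u psi1 <= Rmax B psi1) by (apply Rle_max_compat_r; lra). lra. }
  exists (D + 1/2 * (D + D)).
  apply (conv_env_le_of_bounded_right _ p (1 - p)); [lra|]. intros w Hw.
  eapply ER_le_trans; [apply (J0_le_split_energy J1 J2 w w)|].
  unfold split_energy. replace (2 * w - w) with w by ring.
  destruct (HJ w ltac:(lra)) as [H1 H2].
  apply (ER_le_plus _ (Fin D) _ (Fin (1/2 * (D + D)))); auto.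
  apply (ER_le_scale (1/2) _ (Fin (D + D))); [lra|].
  apply (ER_le_plus _ (Fin D) _ (Fin D)); auto.
Qed.

Lemma Psi_tends_to_PInf p : J1 p = PInf -> J2 p = PInf ->
  forall B, exists d, 0 < d /\ forall y, Rabs (y - p) < d -> ER_le (Fin B) (Psi y).
Proof.
  intros Hp1 Hp2 B.
  assert (Hp0 : p <= 0).
  { apply Rnot_lt_le. intro Hp. destruct (Hdom p Hp) as [v Hv]. congruence. }
  assert (HPp : Psi p = PInf).
  { pose proof (proj2 (HB1 p)) as H. rewrite Hp1 in H. destruct (Psi p); simpl in H; tauto. }
  destruct Psi_finite_at_1 as [psi1 Hpsi1].
  apply NNPP. intro Hnot.
  assert (Hacc : forall w, p < w <= 1 -> exists y u, p < y <= w /\ Psi y = Fin u /\ u <= B).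
  { intros w Hw. apply NNPP. intro Hn. apply Hnot. exists (w - p). split; [lra|].
    intros y Hy. apply Rabs_def2 in Hy.
    destruct (Rle_lt_dec y p) as [Hyp|Hyp].
    - destruct (Req_dec y p) as [->|Hne]; [rewrite HPp; simpl; auto|].
      rewrite (ER_convex_PInf_left Psi y p 1 psi1); simpl; auto; lra.
    - pose proof (HPsi_nonneg y).
      destruct (Psi y) as [u| |] eqn:Hu; simpl in *; auto; try tauto.
      apply Rnot_lt_le. intro HuB. apply Hn. exists y, u. repeat split; auto; lra. }
  destruct (conv_env_J0_bounded p B ltac:(lra) Hacc) as [C HC].
  rewrite <- (Hbelow p) in HC by lra.
  unfold J0 in HC. rewrite Hp2 in HC. exact HC.
Qed.

Lemma lsc_off_domain p : J1 p = PInf -> J2 p = PInf -> lsc_at J1 p /\ lsc_at J2 p.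
Proof.
  intros Hp1 Hp2.
  split; intros K _; destruct (Psi_tends_to_PInf p Hp1 Hp2 (K / c1 + 1)) as [d [Hd H]];
    exists d; split; auto; intros y Hy;
    replace K with (c1 * ((K / c1 + 1) - 1)) by (field; lra);
    apply (ER_le_of_scaled_shift _ _ (Psi y)); auto; try lra;
    [apply (proj1 (HB1 y))|apply (proj1 (HB2 y))].
Qed.

End Coercivity.

Lemma lim_pinfty_near f L e : lim_pinfty f L -> 0 < e ->
  exists M, forall z, M < z -> exists v, f z = Fin v /\ L - e < v < L + e.
Proof.
  intros H He. destruct (H e He) as [M HM]. exists M. intros z Hz.
  destruct (HM z Hz) as [v [Hv1 Hv2]]. apply Rabs_def2 in Hv2. exists v. split; [auto|lra].
Qed.

Lemma affine_minorant_slope_nonpos f L c s : lim_pinfty f L ->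
  (forall z, ER_le (Fin (c + s * z)) (f z)) -> s <= 0.
Proof.
  intros Hlim Hmin. apply Rnot_lt_le. intro Hs.
  destruct (lim_pinfty_near f L 1 Hlim ltac:(lra)) as [M HM].
  set (z := Rmax (M + 1) ((L + 1 - c) / s)).
  destruct (HM z ltac:(unfold z; pose proof (Rmax_l (M + 1) ((L + 1 - c) / s)); lra))
    as [v [Hv Hv']].
  pose proof (Hmin z) as H. rewrite Hv in H. simpl in H.
  assert (Hz : (L + 1 - c) / s <= z) by apply Rmax_r.
  apply (Rmult_le_compat_l s) in Hz; [|lra].
  replace (s * ((L + 1 - c) / s)) with (L + 1 - c) in Hz by (field; lra). lra.
Qed.

Lemma J0_limit_le_half_min J1 J2 J0inf d1 m1 :
  lim_pinfty J1 0 -> lim_pinfty J2 0 -> lim_pinfty (J0 J1 J2) J0inf -> J1 d1 = Fin m1 ->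
  J0inf <= 1/2 * m1.
Proof.
  intros Hlim1 Hlim2 Hlim0 Hm1.
  apply Rle_plus_epsilon. intros e He.
  destruct (lim_pinfty_near _ _ (e / 3) Hlim0 ltac:(lra)) as [M0 HM0].
  destruct (lim_pinfty_near _ _ (e / 3) Hlim1 ltac:(lra)) as [M1 HM1].
  destruct (lim_pinfty_near _ _ (e / 3) Hlim2 ltac:(lra)) as [M2 HM2].
  set (z := Rabs M0 + Rabs M1 + Rabs M2 + Rabs d1 + 1).
  pose proof (Rle_abs M0). pose proof (Rle_abs M1). pose proof (Rle_abs M2).
  pose proof (Rle_abs d1). pose proof (Rabs_pos M0). pose proof (Rabs_pos M1).
  pose proof (Rabs_pos M2). pose proof (Rabs_pos d1).
  destruct (HM0 z ltac:(unfold z; lra)) as [v0 [Ev0 Hv0]].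
  destruct (HM1 (2 * z - d1) ltac:(unfold z; lra)) as [v1 [Ev1 Hv1]].
  destruct (HM2 z ltac:(unfold z; lra)) as [v2 [Ev2 Hv2]].
  pose proof (J0_le_split_energy J1 J2 d1 z) as Hsplit. unfold split_energy in Hsplit.
  rewrite Ev0, Ev2, Hm1, Ev1 in Hsplit. simpl in Hsplit. lra.
Qed.

(* Far right one of [a], [2z - a] is beyond [z], where [J1] is close to [0]. *)
Lemma split_energy_far_right J1 J2 m1 k :
  lim_pinfty J1 0 -> lim_pinfty J2 0 -> (forall x, ER_le (Fin m1) (J1 x)) -> 0 < k ->
  exists Z, forall a z, Z < z -> ER_le (Fin (1/2 * m1 - k)) (split_energy J1 J2 a z).
Proof.
  intros Hlim1 Hlim2 Hm1 Hk.
  destruct (lim_pinfty_near _ _ (k / 2) Hlim1 ltac:(lra)) as [M1 HM1].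
  destruct (lim_pinfty_near _ _ (k / 2) Hlim2 ltac:(lra)) as [M2 HM2].
  exists (Rmax M1 M2). intros a z Hz.
  pose proof (Rmax_l M1 M2). pose proof (Rmax_r M1 M2).
  destruct (HM2 z ltac:(lra)) as [u2 [Eu2 Hu2]].
  destruct (Rle_dec z a) as [Hza|Hza].
  - destruct (HM1 a ltac:(lra)) as [u [Eu Hu]].
    apply (ER_le_Fin_trans _ (u2 + 1/2 * (u + m1))); [lra|].
    apply split_energy_ge; [rewrite Eu2|rewrite Eu|apply Hm1]; simpl; lra.
  - destruct (HM1 (2 * z - a) ltac:(lra)) as [u [Eu Hu]].
    apply (ER_le_Fin_trans _ (u2 + 1/2 * (m1 + u))); [lra|].
    apply split_energy_ge; [rewrite Eu2|apply Hm1|rewrite Eu]; simpl; lra.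
Qed.

(* Far left the superlinear growth of [J1 >= c1 (Psi - 1)] beats any affine function
   of nonpositive slope, since [s z <= s min(a, 2z - a)]. *)
Lemma split_energy_far_left J1 J2 Psi c1 m1 m2 c s :
  0 < c1 -> s <= 0 ->
  (forall K, exists M, forall z, z < M -> ER_le (Fin (K * Rabs z)) (Psi z)) ->
  (forall z, ER_le (ER_scale c1 (ER_plus (Psi z) (Fin (-1)))) (J1 z)) ->
  (forall x, ER_le (Fin m1) (J1 x)) -> (forall x, ER_le (Fin m2) (J2 x)) ->
  exists U, forall a z, Rmin a (2 * z - a) < U ->
    ER_le (Fin (c + s * z + 1)) (split_energy J1 J2 a z).
Proof.
  intros Hc1 Hs Hsuper HB1 Hm1 Hm2.
  destruct (Hsuper (2 * (1 - s) / c1)) as [M HM].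
  set (B := m2 + 1/2 * m1 - 1/2 * c1 - c - 1).
  set (U := Rmin (Rmin M 0) B).
  assert (HU : U <= M /\ U <= 0 /\ U <= B).
  { pose proof (Rmin_l (Rmin M 0) B). pose proof (Rmin_r (Rmin M 0) B).
    pose proof (Rmin_l M 0). pose proof (Rmin_r M 0). unfold U. lra. }
  assert (HJ1u : forall u, u < U -> ER_le (Fin (2 * (1 - s) * - u - c1)) (J1 u)).
  { intros u Hu.
    replace (2 * (1 - s) * - u - c1) with (c1 * ((2 * (1 - s) / c1 * Rabs u) - 1))
      by (rewrite Rabs_left by lra; field; lra).
    apply (ER_le_of_scaled_shift _ _ (Psi u)); [lra|apply HM; lra|apply HB1]. }
  exists U. intros a z Hu.
  destruct (Rle_dec a (2 * z - a)) as [Ha|Ha].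
  - rewrite Rmin_left in Hu by lra.
    assert (Hsz : s * z <= s * a) by (apply Rmult_le_compat_neg_l; lra).
    apply (ER_le_Fin_trans _ (m2 + 1/2 * ((2 * (1 - s) * - a - c1) + m1))).
    + unfold B in HU. lra.
    + apply split_energy_ge; auto.
  - rewrite Rmin_right in Hu by lra.
    assert (Hsz : s * z <= s * (2 * z - a)) by (apply Rmult_le_compat_neg_l; lra).
    apply (ER_le_Fin_trans _ (m2 + 1/2 * (m1 + (2 * (1 - s) * - (2 * z - a) - c1)))).
    + unfold B in HU. lra.
    + apply split_energy_ge; auto.
Qed.

Lemma lsc_potentials alpha J0inf Psi c1 c2 d1 d2 gamma J1 J2 :
  (forall z, J1 z <> MInf) -> (forall z, J2 z <> MInf) ->
  LJ3 alpha J0inf J1 J2 -> LJ4 Psi c1 c2 d1 d2 gamma J0inf J1 J2 ->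
  forall p, lsc_at J1 p /\ lsc_at J2 p.
Proof.
  intros HM1 HM2 HL3 HL4 p.
  destruct HL3 as [_ [[g1 [Hg1 _]] [[g2 [Hg2 _]] [_ [Hdomeq [Hdom _]]]]]].
  destruct HL4 as [Hconv [Hnn [_ [Hc1 [Hc2 [HB1 [HB2 [_ [_ [Hgam [_ [_ [_ [_ [_ [_ Hbelow]]]]]]]]]]]]]]]].
  destruct (J1 p) as [v1| |] eqn:E1; [| |exfalso; exact (HM1 p E1)].
  - assert (Hin2 : in_dom J2 p) by (apply Hdomeq; exists v1; auto).
    destruct Hin2 as [v2 E2].
    split; [apply (lsc_at_diff_within J1 (g1 p) p v1)|apply (lsc_at_diff_within J2 (g2 p) p v2)];
      auto; [apply Hg1|apply Hg2]; eexists; eauto.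
  - assert (E2 : J2 p = PInf).
    { destruct (J2 p) as [v2| |] eqn:E2; auto; [|exfalso; exact (HM2 p E2)].
      destruct (proj2 (Hdomeq p) (ex_intro _ v2 E2)). congruence. }
    apply (lsc_off_domain J1 J2 Psi c1 c2 gamma); auto.
Qed.

(* Right of [gamma] the tangent stays below [J0 gamma < J0(+oo) <= min J1 / 2]. *)
Lemma tangent_gap_far_right J1 J2 J0inf gamma d1 m1 l s c0 :
  lim_pinfty J1 0 -> lim_pinfty J2 0 -> lim_pinfty (J0 J1 J2) J0inf ->
  J1 d1 = Fin m1 -> (forall x, ER_le (Fin m1) (J1 x)) -> s <= 0 ->
  ER_lt (J0 J1 J2 gamma) (Fin J0inf) -> ER_le (Fin (c0 + s * (gamma - l))) (J0 J1 J2 gamma) ->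
  exists k Z, 0 < k /\ forall a z, Z < z -> gamma <= z ->
    ER_le (Fin (c0 + s * (z - l) + k)) (split_energy J1 J2 a z).
Proof.
  intros Hlim1 Hlim2 Hlim0 Hm1 HJ1m Hs [Hlt0 Hne] HLg.
  destruct (J0 J1 J2 gamma) as [g0| |]; simpl in HLg, Hlt0; try tauto.
  assert (Hg0 : g0 < J0inf) by (destruct Hlt0; [auto|congruence]).
  pose proof (J0_limit_le_half_min J1 J2 J0inf d1 m1 Hlim1 Hlim2 Hlim0 Hm1) as Hinf.
  set (k := (J0inf - g0) / 2).
  destruct (split_energy_far_right J1 J2 m1 k Hlim1 Hlim2 HJ1m ltac:(unfold k; lra))
    as [Z HZ].
  exists k, Z. split; [unfold k; lra|]. intros a z Hz Hgz.
  apply (ER_le_Fin_trans _ (1/2 * m1 - k)); [|apply HZ; lra].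
  assert (s * (z - l) <= s * (gamma - l)) by (apply Rmult_le_compat_neg_l; lra).
  unfold k in *. lra.
Qed.

Lemma split_energy_uniform_gap alpha J0inf Psi c1 c2 d1 d2 gamma J1 J2 l s c0 eps :
  (forall z, J1 z <> MInf) -> (forall z, J2 z <> MInf) ->
  LJ1 J1 J2 -> LJ2 J1 J2 -> LJ3 alpha J0inf J1 J2 -> LJ4 Psi c1 c2 d1 d2 gamma J0inf J1 J2 ->
  conv_env (J0 J1 J2) l = Fin c0 ->
  (forall z, ER_le (Fin (c0 + s * (z - l))) (conv_env (J0 J1 J2) z)) -> s <= 0 -> 0 < eps ->
  exists eta, 0 < eta /\ forall a z, has_gap J1 J2 l s c0 (Rmin l gamma) eps eta a z.
Proof.
  intros HM1 HM2 HL1 HL2 HL3 HL4 Hc0 Htan Hs Heps.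
  pose proof (lsc_potentials _ _ _ _ _ _ _ _ _ _ HM1 HM2 HL3 HL4) as Hlsc.
  destruct HL3 as [_ [_ [_ [_ [Hdomeq [Hdom [Hlim1 [Hlim2 Hlim0]]]]]]]].
  destruct HL4 as [_ [_ [Hsuper [Hc1 [_ [HB1 [_ [Hd1 [Hd2 [_ [Harg1 [Harg2 [Harg0 [_ [_ [Hlt0 Hbelow]]]]]]]]]]]]]]]].
  destruct (Hdom d1 Hd1) as [m1 Hm1].
  destruct (proj1 (Hdomeq d2) (Hdom d2 Hd2)) as [m2 Hm2].
  assert (HJ1m : forall x, ER_le (Fin m1) (J1 x)) by (intros x; rewrite <- Hm1; apply Harg1).
  assert (HJ2m : forall x, ER_le (Fin m2) (J2 x)) by (intros x; rewrite <- Hm2; apply Harg2).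
  destruct (tangent_gap_far_right J1 J2 J0inf gamma d1 m1 l s c0 Hlim1 Hlim2 Hlim0 Hm1 HJ1m Hs
              Hlt0 (ER_le_trans _ _ _ (Htan gamma) (conv_env_le _ gamma))) as [kap [Z [Hkap HZ]]].
  destruct (split_energy_far_left J1 J2 Psi c1 m1 m2 (c0 - s * l) s Hc1 Hs Hsuper
              (fun z => proj1 (HB1 z)) HJ1m HJ2m) as [U HU].
  set (Z' := Rabs Z + Rabs gamma). set (U' := Rabs U).
  assert (HZ' : Z <= Z' /\ gamma <= Z' /\ 0 <= Z').
  { pose proof (Rle_abs Z). pose proof (Rle_abs gamma).
    pose proof (Rabs_pos Z). pose proof (Rabs_pos gamma). unfold Z'. lra. }
  assert (HU' : - U' <= U /\ 0 <= U').
  { pose proof (Rle_abs (- U)). rewrite Rabs_Ropp in *. pose proof (Rabs_pos U). unfold U'. lra. }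
  destruct (has_gap_on_box J1 J2 l s c0 (Rmin l gamma) eps HM1 HM2
              (fun p => proj1 (Hlsc p)) (fun p => proj2 (Hlsc p))
              (fun a z => split_energy_gt_tangent J1 J2 gamma l s c0 HL1 HL2 Harg0 Hbelow
                            Hc0 Htan Hs eps a z Heps)
              (- U') (2 * Z' + U') (- U') Z' ltac:(lra) ltac:(lra)) as [e [He Hbox]].
  exists (Rmin kap (Rmin 1 e)).
  pose proof (Rmin_l kap (Rmin 1 e)). pose proof (Rmin_r kap (Rmin 1 e)).
  pose proof (Rmin_l 1 e). pose proof (Rmin_r 1 e).
  split; [repeat apply Rmin_pos; lra|]. intros a z.
  destruct (Rlt_le_dec Z' z) as [Hz|Hz].
  { intros _. apply (ER_le_Fin_trans _ (c0 + s * (z - l) + kap)); [lra|apply HZ; lra]. }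
  destruct (Rlt_le_dec (Rmin a (2 * z - a)) U) as [Hu|Hu].
  { intros _. apply (ER_le_Fin_trans _ (c0 - s * l + s * z + 1)); [lra|auto]. }
  assert (- U' <= a /\ - U' <= 2 * z - a).
  { pose proof (Rmin_l a (2 * z - a)). pose proof (Rmin_r a (2 * z - a)). lra. }
  apply (has_gap_le J1 J2 l s c0 (Rmin l gamma) eps e); [lra|]. apply Hbox; lra.
Qed.

Lemma Fl_ge_of_gap J1 J2 gamma l s c0 eps eta z :
  (forall z, J2 z <> MInf) -> conv_env (J0 J1 J2) l = Fin c0 ->
  (forall a, has_gap J1 J2 l s c0 (Rmin l gamma) eps eta a z) ->
  ER_le (Fin eta) (Fl J1 J2 gamma l s eps z).
Proof.
  intros HM2 Hc0 Hgap. unfold Fl. rewrite Hc0. simpl ER_neg.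
  destruct (J2 z) as [u2| |] eqn:E2; [|destruct (ER_inf _); simpl; auto|exfalso; exact (HM2 z E2)].
  assert (HI : ER_le (Fin (c0 + s * (z - l) + eta - u2))
        (ER_inf (fun v => exists a, eps <= Rabs (a - Rmin l gamma) /\
                                v = ER_scale (1/2) (ER_plus (J1 a) (J1 (2 * z - a)))))).
  { apply ER_inf_glb. intros v [a [Ha ->]].
    pose proof (Hgap a Ha) as G. unfold split_energy in G. rewrite E2 in G.
    destruct (ER_scale (1/2) (ER_plus (J1 a) (J1 (2 * z - a)))); simpl in G |- *; auto; lra. }
  eapply ER_le_trans; [|apply ER_le_plus; [exact HI|apply ER_le_refl]]. simpl. lra.
Qed.

Theorem lemma4p1 (J1 J2 : R -> ER)
  (alpha J0inf c1 c2 d1 d2 gamma : R) (Psi : R -> ER)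
  (HJ1 : forall z, J1 z <> MInf) (HJ2 : forall z, J2 z <> MInf)
  (HL1 : LJ1 J1 J2) (HL2 : LJ2 J1 J2) (HL3 : LJ3 alpha J0inf J1 J2)
  (HL4 : LJ4 Psi c1 c2 d1 d2 gamma J0inf J1 J2)
  (l s : R) (Hl : 0 < l) (Hs : ER_deriv (conv_env (J0 J1 J2)) l s) :
  forall eps, 0 < eps -> exists eta, 0 < eta /\
    forall z, ER_le (Fin eta) (Fl J1 J2 gamma l s eps z).
Proof.
  intros eps Heps.
  destruct (proj1 Hs) as [del [Hdel Hnear]].
  destruct (Hnear l ltac:(rewrite Rminus_diag, Rabs_R0; lra)) as [c0 Hc0].
  pose proof (conv_env_tangent _ _ _ _ Hc0 Hs) as Htan.
  assert (Hs0 : s <= 0).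
  { destruct HL3 as [_ [_ [_ [_ [_ [_ [_ [_ Hlim0]]]]]]]].
    apply (affine_minorant_slope_nonpos (J0 J1 J2) J0inf (c0 - s * l) s Hlim0).
    intros z. eapply ER_le_trans; [|apply conv_env_le].
    eapply ER_le_trans; [|apply Htan]. simpl. lra. }
  destruct (split_energy_uniform_gap _ _ _ _ _ _ _ _ _ _ _ _ _ _
              HJ1 HJ2 HL1 HL2 HL3 HL4 Hc0 Htan Hs0 Heps) as [eta [Heta Hgap]].
  exists eta. split; auto. intros z.
  apply (Fl_ge_of_gap _ _ _ _ _ c0); auto.
Qed.
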